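(* Let $P_1,P_2$ be distinct points of $D$, and let $v_1,v_2\in S^1$ be the endpoints of the chord through $P_1,P_2$, with $v_1$ closer to $P_1$ than to $P_2$. Let $n\in\mathbb Z_{>0}$. For $P\in D$ not on the line $P_1P_2$, define $$\tau_n(P)=\#\{w\in S^1 \mid w\neq v_1,v_2,\ P \text{ lies on the line through } w \text{ and } \psi_{P_1P_2}^{2n}(w)\}.$$ Then $\tau_n(P)=0$ if $\delta(P_1,P_2,P)<\Delta_n'(P_1,P_2)$, $\tau_n(P)=1$ if $\delta(P_1,P_2,P)=\Delta_n'(P_1,P_2)$, and $\tau_n(P)=2$ if $\delta(P_1,P_2,P)>\Delta_n'(P_1,P_2)$.
   Context: $D$ is the open unit disk in $\mathbb R^2$ and $S^1$ its boundary circle. For a closed convex $U\subset D$ and $v\in S^1$, $\psi_U(v)$ is the point $w\in S^1\setminus\{v\}$ such that the line $vw$ meets $U$ and $U$ lies in the closed half-plane to the left of the directed line from $v$ to $w$; $\psi_{P_1P_2}$ denotes $\psi_U$ for $U$ the closed segment $P_1P_2$. Regard $D$ as the Beltrami–Klein model (hyperbolic lines are chords). For distinct $P,Q\in D$ with chord endpoints $u_1,u_2\in S^1$, $d'(P,Q)=\tfrac12\left|\log\frac{|u_1Q||u_2P|}{|u_1P||u_2Q|}\right|$; $\Delta_n'(P,Q)=\log\frac{e^{n d'(P,Q)}+1}{e^{n d'(P,Q)}-1}$ for $n\in\mathbb Z_{>0}$; $\delta(P,Q,R)=\min\{d'(R,S): S \text{ on the chord through } P,Q\}$. *)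

From Stdlib Require Import Reals Lra List ClassicalEpsilon.
Import ListNotations.
Open Scope R_scope.

Definition point : Type := (R * R)%type.

Definition inD (P : point) : Prop := fst P ^ 2 + snd P ^ 2 < 1.
Definition onS1 (P : point) : Prop := fst P ^ 2 + snd P ^ 2 = 1.

Definition cross (A B C : point) : R :=
  (fst B - fst A) * (snd C - snd A) - (snd B - snd A) * (fst C - fst A).

Definition collinear (A B C : point) : Prop := cross A B C = 0.

Definition edist (A B : point) : R :=
  sqrt ((fst A - fst B) ^ 2 + (snd A - snd B) ^ 2).

Definition segment (P1 P2 : point) (X : point) : Prop :=
  exists t, 0 <= t <= 1 /\
    X = ((1 - t) * fst P1 + t * fst P2, (1 - t) * snd P1 + t * snd P2).

Definition psi_spec (U : point -> Prop) (v w : point) : Prop :=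
  onS1 w /\ w <> v /\ (exists X, U X /\ collinear v w X) /\
  (forall X, U X -> 0 <= cross v w X).

Definition psi (U : point -> Prop) (v : point) : point :=
  epsilon (inhabits v) (fun w => psi_spec U v w).

Definition psi_seg (P1 P2 : point) : point -> point := psi (segment P1 P2).

Definition iter_pt (f : point -> point) (k : nat) (v : point) : point :=
  Nat.iter k f v.

Definition chord_ends_spec (P Q : point) (u : point * point) : Prop :=
  onS1 (fst u) /\ onS1 (snd u) /\ fst u <> snd u /\
  collinear (fst u) (snd u) P /\ collinear (fst u) (snd u) Q.

Definition chord_ends (P Q : point) : point * point :=
  epsilon (inhabits (P, Q)) (chord_ends_spec P Q).

Definition dK (P Q : point) : R :=
  let u1 := fst (chord_ends P Q) in
  let u2 := snd (chord_ends P Q) in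
  / 2 * Rabs (ln ((edist u1 Q * edist u2 P) / (edist u1 P * edist u2 Q))).

Definition DeltaK (n : nat) (P Q : point) : R :=
  ln ((exp (INR n * dK P Q) + 1) / (exp (INR n * dK P Q) - 1)).

Definition is_delta (P Q Rp : point) (m : R) : Prop :=
  (exists S, inD S /\ collinear P Q S /\ dK Rp S = m) /\
  (forall S, inD S -> collinear P Q S -> m <= dK Rp S).

Definition delta (P Q Rp : point) : R :=
  epsilon (inhabits 0) (is_delta P Q Rp).

Definition has_card (A : point -> Prop) (k : nat) : Prop :=
  exists l : list point, NoDup l /\ length l = k /\ (forall w, A w <-> In w l).

Definition tau_set (P1 P2 v1 v2 : point) (n : nat) (P : point) (w : point) : Prop :=
  onS1 w /\ w <> v1 /\ w <> v2 /\
  let w' := iter_pt (psi_seg P1 P2) (2 * n) w in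
  w' <> w /\ collinear w w' P.

(* Away from the chord [v1 v2], the unit circle carries a projective coordinate
   [z] with [v1] at 0 and [v2] at infinity.  The chords through a fixed point [P]
   of the disk are the pairs [(z1, z2)] annihilating one symmetric bilinear form,
   which for [P] on the chord [v1 v2] reads [z1 z2 = -c < 0].  Hence [psi_{P1P2}]
   acts as [z |-> -c1 / z] or [z |-> -c2 / z] according to the side of the chord,
   and [psi^2] multiplies [z] by [exp (2 d'(P1,P2))] on one side and divides it on
   the other.  So [w] counts in [tau_n(P)] exactly when its coordinate is a root of
   a quadratic whose discriminant is a positive multiple of
   [cosh^2 delta - cosh^2 Delta_n'], by the Klein-model formula
   [cosh^2 d'(P,Q) = (1 - P.Q)^2 / ((1 - |P|^2) (1 - |Q|^2))]. *)

From Stdlib Require Import Reals Lra Lia Nsatz ClassicalEpsilon List.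
Import ListNotations.
Open Scope R_scope.

Definition dot (A B : point) : R := fst A * fst B + snd A * snd B.

Definition sqdist (A B : point) : R :=
  (fst B - fst A) * (fst B - fst A) + (snd B - snd A) * (snd B - snd A).

Definition lerp (A B : point) (t : R) : point :=
  (fst A + t * (fst B - fst A), snd A + t * (snd B - snd A)).

Lemma inD_iff (P : point) : inD P <-> dot P P < 1.
Proof. unfold inD, dot; simpl; split; intro; lra. Qed.

Lemma onS1_iff (P : point) : onS1 P <-> dot P P = 1.
Proof. unfold onS1, dot; simpl; split; intro; lra. Qed.

Lemma sqdist_pos (A B : point) : A <> B -> 0 < sqdist A B.
Proof.
  destruct A as [a b], B as [c d]; unfold sqdist; simpl; intro H.
  destruct (Req_dec a c), (Req_dec b d); subst; try congruence; nra.
Qed.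

Lemma sqdist_onS1 (v w : point) : onS1 v -> onS1 w -> sqdist v w = 2 * (1 - dot v w).
Proof.
  rewrite !onS1_iff; destruct v as [a b], w as [c d]; unfold sqdist, dot; simpl; lra.
Qed.

Lemma one_sub_dot_pos (v w : point) : onS1 v -> onS1 w -> v <> w -> 0 < 1 - dot v w.
Proof.
  intros Hv Hw Hvw; pose proof (sqdist_pos _ _ Hvw) as H.
  rewrite sqdist_onS1 in H by assumption; lra.
Qed.

Lemma dot_lt_1 (w Q : point) : onS1 w -> inD Q -> dot w Q < 1.
Proof.
  rewrite onS1_iff, inD_iff; destruct w as [a b], Q as [c d]; unfold dot; simpl; intros Hw HQ.
  pose proof (Rle_0_sqr (a - c)); pose proof (Rle_0_sqr (b - d)); unfold Rsqr in *; nra.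
Qed.

Lemma cross_cycle (A B C : point) : cross A B C = cross B C A.
Proof. unfold cross; ring. Qed.

Lemma cross_swap (A B C : point) : cross A C B = - cross A B C.
Proof. unfold cross; ring. Qed.

Lemma cross_swap_l (A B C : point) : cross B A C = - cross A B C.
Proof. unfold cross; ring. Qed.

Lemma cross_diag (A B : point) : cross A B B = 0.
Proof. unfold cross; ring. Qed.

Lemma cross_lerp (A B : point) (t : R) : cross A B (lerp A B t) = 0.
Proof. unfold cross, lerp; simpl; ring. Qed.

Lemma cross_lerp_lerp (A B X : point) (s t : R) :
  cross (lerp A B s) (lerp A B t) X = (t - s) * cross A B X.
Proof. unfold cross, lerp; simpl; ring. Qed.

Lemma lerp_inj (A B : point) (s t : R) : A <> B -> lerp A B s = lerp A B t -> s = t.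
Proof.
  intros HAB E; pose proof (sqdist_pos _ _ HAB) as HN.
  destruct A as [a b], B as [c d]; unfold lerp, sqdist in *; simpl in *.
  injection E; intros E2 E1.
  assert (X1 : (s - t) * (c - a) = 0) by lra; assert (X2 : (s - t) * (d - b) = 0) by lra.
  assert (K : (s - t) * ((c - a) * (c - a) + (d - b) * (d - b)) = 0).
  { transitivity ((s - t) * (c - a) * (c - a) + (s - t) * (d - b) * (d - b)); [ring|].
    rewrite X1, X2; ring. }
  apply Rmult_integral in K; destruct K; lra.
Qed.

Lemma collinear_lerp (A B X : point) : A <> B -> collinear A B X -> exists t, X = lerp A B t.
Proof.
  intros HAB Hc; pose proof (sqdist_pos _ _ HAB) as HN.
  destruct A as [a b], B as [c d], X as [x y]; unfold collinear, cross, lerp, sqdist in *.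
  simpl in *.
  set (N := (c - a) * (c - a) + (d - b) * (d - b)) in *.
  exists (((x - a) * (c - a) + (y - b) * (d - b)) / N); f_equal; apply (Rmult_eq_reg_r N); try lra.
  - assert (K : (x - a) * N - ((x - a) * (c - a) + (y - b) * (d - b)) * (c - a)
       = - (d - b) * ((c - a) * (y - b) - (d - b) * (x - a))) by (unfold N; ring).
    rewrite Hc, Rmult_0_r in K; field_simplify; lra.
  - assert (K : (y - b) * N - ((x - a) * (c - a) + (y - b) * (d - b)) * (d - b)
       = (c - a) * ((c - a) * (y - b) - (d - b) * (x - a))) by (unfold N; ring).
    rewrite Hc, Rmult_0_r in K; field_simplify; lra.
Qed.

Lemma collinear_rebase (A B P Q : point) :
  A <> B -> collinear A B P -> collinear A B Q -> collinear P Q A.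
Proof.
  intros HAB HP HQ.
  destruct (collinear_lerp A B P HAB HP) as [p ->], (collinear_lerp A B Q HAB HQ) as [q ->].
  unfold collinear; rewrite cross_lerp_lerp; unfold cross; ring.
Qed.

Lemma edist_sym (A B : point) : edist A B = edist B A.
Proof. unfold edist; f_equal; ring. Qed.

Lemma edist_lerp_l (A B : point) (t : R) : edist (lerp A B t) A = Rabs t * sqrt (sqdist A B).
Proof.
  unfold edist, lerp; simpl.
  replace (_ + _) with (Rsqr t * sqdist A B) by (unfold Rsqr, sqdist; ring).
  rewrite sqrt_mult_alt, sqrt_Rsqr_abs by apply Rle_0_sqr; reflexivity.
Qed.

Lemma edist_lerp_r (A B : point) (t : R) : edist (lerp A B t) B = Rabs (1 - t) * sqrt (sqdist A B).
Proof.
  unfold edist, lerp; simpl.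
  replace (_ + _) with (Rsqr (1 - t) * sqdist A B) by (unfold Rsqr, sqdist; ring).
  rewrite sqrt_mult_alt, sqrt_Rsqr_abs by apply Rle_0_sqr; reflexivity.
Qed.

Lemma norm_lerp (A B : point) (t : R) :
  dot (lerp A B t) (lerp A B t) - 1
  = sqdist A B * t * t + 2 * (dot A B - dot A A) * t + (dot A A - 1).
Proof. unfold dot, lerp, sqdist; simpl; ring. Qed.

Lemma one_sub_dot_lerp (A B P : point) (s : R) :
  1 - dot P (lerp A B s) = (1 - s) * (1 - dot A P) + s * (1 - dot B P).
Proof. unfold dot, lerp; simpl; ring. Qed.

Lemma edist_lerp_lt (A B : point) (s t : R) : A <> B -> 0 <= s -> 0 <= t ->
  edist A (lerp A B s) < edist A (lerp A B t) -> s < t.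
Proof.
  intros HAB Hs Ht; rewrite !(edist_sym A), !edist_lerp_l, !Rabs_pos_eq by assumption.
  pose proof (sqrt_lt_R0 _ (sqdist_pos A B HAB)); nra.
Qed.

Lemma quadratic_square (A B C u : R) : A <> 0 ->
  (A * u * u + B * u + C = 0 <-> (2 * A * u + B) * (2 * A * u + B) = B * B - 4 * A * C).
Proof.
  intro HA; split; intro H.
  - transitivity (4 * A * (A * u * u + B * u + C) + B * B - 4 * A * C); [ring|].
    rewrite H; ring.
  - apply (Rmult_eq_reg_l (4 * A)); [|lra].
    transitivity ((2 * A * u + B) * (2 * A * u + B) - (B * B - 4 * A * C)); [ring|].
    rewrite H; ring.
Qed.

Lemma quadratic_no_root (A B C u : R) : A <> 0 -> B * B - 4 * A * C < 0 ->
  A * u * u + B * u + C <> 0.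
Proof.
  intros HA Hd Hu; apply (quadratic_square A B C u HA) in Hu.
  pose proof (Rle_0_sqr (2 * A * u + B)); unfold Rsqr in *; lra.
Qed.

Lemma quadratic_double_root (A B C u : R) : A <> 0 -> B * B - 4 * A * C = 0 ->
  (A * u * u + B * u + C = 0 <-> u = - B / (2 * A)).
Proof.
  intros HA Hd; rewrite (quadratic_square A B C u HA), Hd; split; intro H.
  - assert (X : 2 * A * u + B = 0) by (apply Rsqr_0_uniq; unfold Rsqr; lra).
    apply (Rmult_eq_reg_l (2 * A)); [|lra].
    replace (2 * A * (- B / (2 * A))) with (- B) by (field; lra); lra.
  - rewrite H; field_simplify; lra.
Qed.

Lemma quadratic_two_roots (A B C : R) : A <> 0 -> 0 < B * B - 4 * A * C ->
  exists r1 r2, r1 <> r2 /\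
    forall u, A * u * u + B * u + C = 0 <-> u = r1 \/ u = r2.
Proof.
  intros HA Hd; set (s := sqrt (B * B - 4 * A * C)).
  assert (Hs : 0 < s) by (apply sqrt_lt_R0; lra).
  assert (Hss : s * s = B * B - 4 * A * C) by (apply sqrt_sqrt; lra).
  exists ((- B + s) / (2 * A)), ((- B - s) / (2 * A)); split.
  - intro E; apply (Rmult_eq_compat_l (2 * A)) in E.
    field_simplify in E; [lra | auto | auto].
  - intro u; rewrite (quadratic_square A B C u HA), <- Hss; split.
    + intro H; assert (K : (2 * A * u + B - s) * (2 * A * u + B + s) = 0) by nra.
      assert (H2A : 2 * A <> 0) by (intro; apply HA; lra).
      apply Rmult_integral in K; destruct K; [left|right];
        apply (Rmult_eq_reg_l (2 * A)); auto; field_simplify; auto; lra.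
    + intros [-> | ->]; field; auto.
Qed.

Lemma vieta (A B C t1 t2 : R) : t1 <> t2 ->
  A * t1 * t1 + B * t1 + C = 0 -> A * t2 * t2 + B * t2 + C = 0 ->
  A * (t1 + t2) = - B /\ A * (t1 * t2) = C.
Proof.
  intros Ht R1 R2.
  assert (S : A * (t1 + t2) = - B).
  { assert (K : (t1 - t2) * (A * (t1 + t2) + B) = 0) by lra.
    apply Rmult_integral in K; destruct K; lra. }
  split; [exact S | nra].
Qed.

Lemma has_card_image (S : point -> Prop) (F : R -> point) (Z : R -> Prop) (l : list R) :
  NoDup l -> (forall u, Z u <-> In u l) ->
  (forall u1 u2, Z u1 -> Z u2 -> F u1 = F u2 -> u1 = u2) ->
  (forall w, S w <-> exists u, Z u /\ w = F u) ->
  has_card S (length l).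
Proof.
  intros Hl HZ Hinj HS; exists (map F l); split; [|split].
  - apply NoDup_map_NoDup_ForallPairs; [|exact Hl].
    intros u1 u2 H1 H2; apply Hinj; apply HZ; assumption.
  - apply length_map.
  - intro w; rewrite HS, in_map_iff; split.
    + intros [u [Hu ->]]; exists u; split; [reflexivity | apply HZ; exact Hu].
    + intros [u [<- Hu]]; exists u; split; [apply HZ; exact Hu | reflexivity].
Qed.

Lemma has_card_quadratic_image (S : point -> Prop) (F : R -> point) (A B C : R) : A <> 0 ->
  (forall u1 u2, A * u1 * u1 + B * u1 + C = 0 -> A * u2 * u2 + B * u2 + C = 0 ->
     F u1 = F u2 -> u1 = u2) ->
  (forall w, S w <-> exists u, A * u * u + B * u + C = 0 /\ w = F u) ->
  (B * B - 4 * A * C < 0 -> has_card S 0) /\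
  (B * B - 4 * A * C = 0 -> has_card S 1) /\
  (B * B - 4 * A * C > 0 -> has_card S 2).
Proof.
  intros HA Hinj HS; set (Z u := A * u * u + B * u + C = 0).
  split; [|split]; intro Hd.
  - apply (has_card_image S F Z [] (NoDup_nil _)); auto.
    intro u; split; [apply quadratic_no_root; auto | intros []].
  - apply (has_card_image S F Z [- B / (2 * A)]); auto.
    + repeat constructor; intros [].
    + intro u; unfold Z; rewrite quadratic_double_root by auto; simpl; intuition.
  - destruct (quadratic_two_roots A B C HA Hd) as [r1 [r2 [Hne Hr]]].
    apply (has_card_image S F Z [r1; r2]); auto.
    + repeat constructor; simpl; intuition.
    + intro u; unfold Z; rewrite Hr; simpl; intuition.
Qed.

Lemma cosh_opp (x : R) : cosh (- x) = cosh x.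
Proof. unfold cosh; rewrite Ropp_involutive, Rplus_comm; reflexivity. Qed.

Lemma cosh_ln (q : R) : 0 < q -> cosh (ln q) = (q + / q) / 2.
Proof. intro Hq; unfold cosh; rewrite exp_Ropp, exp_ln by exact Hq; reflexivity. Qed.

Lemma Rsqr_cosh_half_abs_ln (r : R) : 0 < r ->
  Rsqr (cosh (/ 2 * Rabs (ln r))) = (r + 1) * (r + 1) / (4 * r).
Proof.
  intro Hr.
  assert (Habs : cosh (/ 2 * Rabs (ln r)) = cosh (/ 2 * ln r)).
  { destruct (Rcase_abs (ln r)).
    - rewrite Rabs_left by assumption; rewrite <- cosh_opp; f_equal; ring.
    - rewrite Rabs_right by assumption; reflexivity. }
  rewrite Habs; set (y := / 2 * ln r).
  assert (Hy : exp y * exp y = r).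
  { rewrite <- exp_plus; replace (y + y) with (ln r) by (unfold y; field); apply exp_ln, Hr. }
  pose proof (exp_pos y); unfold cosh, Rsqr; rewrite exp_Ropp, <- Hy; field; lra.
Qed.

Lemma cosh_lt (x y : R) : 0 <= x -> x < y -> cosh x < cosh y.
Proof.
  intros Hx Hxy; unfold cosh; rewrite !exp_Ropp.
  assert (Ex : 1 <= exp x).
  { rewrite <- exp_0; destruct Hx as [Hx | <-];
      [left; apply exp_increasing, Hx | right; reflexivity]. }
  pose proof (exp_increasing x y Hxy) as Exy.
  assert (K : exp y + / exp y - (exp x + / exp x)
            = (exp y - exp x) * (exp x * exp y - 1) / (exp x * exp y)) by (field; lra).
  assert (0 < (exp y - exp x) * (exp x * exp y - 1) / (exp x * exp y)).
  { apply Rdiv_lt_0_compat; [apply Rmult_lt_0_compat|]; nra. }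
  lra.
Qed.

Lemma Rsqr_cosh_lt (x y : R) : 0 <= x -> x < y -> Rsqr (cosh x) < Rsqr (cosh y).
Proof.
  intros Hx Hxy.
  assert (C1 : 1 <= cosh x).
  { rewrite <- cosh_0; destruct Hx as [Hx | <-]; [left; apply cosh_lt; lra | right; reflexivity]. }
  pose proof (cosh_lt x y Hx Hxy); unfold Rsqr; nra.
Qed.

Lemma Rsqr_cosh_inj (x y : R) : 0 <= x -> 0 <= y -> Rsqr (cosh x) = Rsqr (cosh y) -> x = y.
Proof.
  intros Hx Hy E; destruct (Rtotal_order x y) as [L | [L | L]]; auto.
  - pose proof (Rsqr_cosh_lt x y Hx L); lra.
  - pose proof (Rsqr_cosh_lt y x Hy L); lra.
Qed.

Lemma chord_ends_exist (P Q : point) : P <> Q -> inD P -> inD Q ->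
  exists u, chord_ends_spec P Q u.
Proof.
  intros HPQ HP HQ; rewrite inD_iff in HP.
  pose proof (sqdist_pos P Q HPQ) as HA.
  destruct (quadratic_two_roots (sqdist P Q) (2 * (dot P Q - dot P P)) (dot P P - 1))
    as [t1 [t2 [Ht Hr]]].
  { apply Rgt_not_eq, HA. }
  { pose proof (Rle_0_sqr (2 * (dot P Q - dot P P))); unfold Rsqr in *; nra. }
  assert (Hon : forall t, t = t1 \/ t = t2 -> onS1 (lerp P Q t)).
  { intros t Ht'; rewrite onS1_iff; apply Hr in Ht'; pose proof (norm_lerp P Q t); lra. }
  exists (lerp P Q t1, lerp P Q t2); unfold chord_ends_spec, collinear; simpl.
  split; [auto|]; split; [auto|]; split.
  - intro E; apply Ht; exact (lerp_inj P Q t1 t2 HPQ E).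
  - rewrite !cross_lerp_lerp; unfold cross; split; ring.
Qed.

Lemma dK_nonneg (P Q : point) : 0 <= dK P Q.
Proof. unfold dK; apply Rmult_le_pos; [lra | apply Rabs_pos]. Qed.

Lemma chord_ends_lerp (P Q : point) : P <> Q -> inD P -> inD Q ->
  exists t1 t2, chord_ends P Q = (lerp P Q t1, lerp P Q t2) /\ t1 <> t2 /\
    sqdist P Q * (t1 + t2) = 2 * (dot P P - dot P Q) /\ sqdist P Q * (t1 * t2) = dot P P - 1.
Proof.
  intros HPQ HP HQ.
  assert (Hspec : chord_ends_spec P Q (chord_ends P Q))
    by (unfold chord_ends; apply epsilon_spec, chord_ends_exist; auto).
  destruct (chord_ends P Q) as [u1 u2].
  destruct Hspec as [Hu1 [Hu2 [Hu12 [CP CQ]]]]; simpl in *; unfold collinear in *.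
  destruct (collinear_lerp P Q u1 HPQ (collinear_rebase u1 u2 P Q Hu12 CP CQ)) as [t1 ->].
  destruct (collinear_lerp P Q u2 HPQ) as [t2 ->].
  { apply (collinear_rebase _ (lerp P Q t1)); [auto | |]; unfold collinear;
      [rewrite cross_swap_l, CP | rewrite cross_swap_l, CQ]; ring. }
  rewrite onS1_iff in Hu1, Hu2; pose proof (norm_lerp P Q t1); pose proof (norm_lerp P Q t2).
  assert (Ht : t1 <> t2) by (intro E; apply Hu12; rewrite E; reflexivity).
  destruct (vieta (sqdist P Q) (2 * (dot P Q - dot P P)) (dot P P - 1) t1 t2 Ht) as [Sum Prod];
    [lra | lra |].
  exists t1, t2; repeat split; auto; lra.
Qed.

Lemma cosh_dK (P Q : point) : P <> Q -> inD P -> inD Q ->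
  Rsqr (cosh (dK P Q)) = (1 - dot P Q) * (1 - dot P Q) / ((1 - dot P P) * (1 - dot Q Q)).
Proof.
  intros HPQ HP HQ.
  destruct (chord_ends_lerp P Q HPQ HP HQ) as (t1 & t2 & Hends & Ht & Sum & Prod).
  unfold dK; rewrite Hends; simpl; rewrite inD_iff in HP, HQ.
  set (A := sqdist P Q); fold A in Sum, Prod.
  (* The cross-ratio in [dK] is [N / M]; Vieta turns [(N + M)^2 / (4 N M)] into
     the dot-product formula. *)
  set (N := (1 - t1) * t2); set (M := t1 * (1 - t2)).
  assert (EN : A * (N + M) = 2 * (1 - dot P Q)).
  { transitivity (A * (t1 + t2) - 2 * (A * (t1 * t2))); [unfold N, M; ring|].
    rewrite Sum, Prod; ring. }
  assert (EM : A * A * (N * M) = (1 - dot P P) * (1 - dot Q Q)).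
  { transitivity (A * (t1 * t2) * (A - A * (t1 + t2) + A * (t1 * t2))); [unfold N, M; ring|].
    rewrite Sum, Prod; unfold A, sqdist, dot; ring. }
  assert (HNM : 0 < N * M).
  { assert (0 < A * A * (N * M)) by (rewrite EM; nra). pose proof (sqdist_pos P Q HPQ); nra. }
  assert (HN : N <> 0) by (intro E; rewrite E in HNM; lra).
  assert (HM : M <> 0) by (intro E; rewrite E in HNM; lra).
  assert (HA : A <> 0) by (apply Rgt_not_eq, sqdist_pos, HPQ).
  assert (Hx : 0 < N / M).
  { replace (N / M) with (N * M / (M * M)) by (field; auto); apply Rdiv_lt_0_compat; nra. }
  assert (HsA : 0 < sqrt A) by (apply sqrt_lt_R0, sqdist_pos, HPQ).
  rewrite !edist_lerp_l, !edist_lerp_r; fold A.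
  replace (Rabs (1 - t1) * sqrt A * (Rabs t2 * sqrt A)
           / (Rabs t1 * sqrt A * (Rabs (1 - t2) * sqrt A))) with (N / M).
  2:{ rewrite <- (Rabs_pos_eq (N / M)) by lra; unfold Rdiv; unfold N, M in *.
      rewrite !Rabs_mult, Rabs_inv, Rabs_mult.
      assert (Rabs t1 <> 0) by (apply Rabs_no_R0; intro E; apply HM; rewrite E; ring).
      assert (Rabs (1 - t2) <> 0) by (apply Rabs_no_R0; intro E; apply HM; rewrite E; ring).
      field; repeat split; lra. }
  rewrite Rsqr_cosh_half_abs_ln by exact Hx.
  replace ((N / M + 1) * (N / M + 1) / (4 * (N / M)))
    with ((A * (N + M)) * (A * (N + M)) / (4 * (A * A * (N * M)))) by (field; auto).
  rewrite EN, EM; field; split; apply Rgt_not_eq; lra.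
Qed.

Definition vec (A B : point) : point := (fst B - fst A, snd B - snd A).

(* For [w] on the unit circle, [exit_point w D] is the other point where the line
   through [w] with direction [D] meets the circle. *)
Definition exit_param (w D : point) : R := -2 * dot w D / dot D D.

Definition exit_point (w D : point) : point :=
  (fst w + exit_param w D * fst D, snd w + exit_param w D * snd D).

Lemma exit_point_onS1 (w D : point) : onS1 w -> 0 < dot D D -> onS1 (exit_point w D).
Proof.
  intros Hw HD; rewrite onS1_iff in *.
  assert (Ht : exit_param w D * dot D D = -2 * dot w D) by (unfold exit_param; field; lra).
  unfold exit_point; generalize dependent (exit_param w D); intros t Ht.
  destruct w as [a b], D as [c d]; unfold dot in *; simpl in *.
  transitivity (a * a + b * b + t * (2 * (a * c + b * d) + t * (c * c + d * d))); [ring|].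
  rewrite Ht, Hw; ring.
Qed.

Lemma exit_point_unique (w D u : point) : onS1 w -> onS1 u -> 0 < dot D D -> u <> w ->
  fst D * (snd u - snd w) = snd D * (fst u - fst w) -> u = exit_point w D.
Proof.
  intros Hw Hu HD Huw Hpar.
  destruct (collinear_lerp w (fst w + fst D, snd w + snd D) u) as [l El].
  { intro E; pose proof (f_equal fst E) as E1; pose proof (f_equal snd E) as E2; simpl in *.
    assert (D1 : fst D = 0) by lra; assert (D2 : snd D = 0) by lra.
    unfold dot in HD; rewrite D1, D2 in HD; lra. }
  { unfold collinear, cross; simpl; lra. }
  assert (Hl : l <> 0)
    by (intro E; apply Huw; rewrite El, E; destruct w; unfold lerp; simpl; f_equal; ring).
  assert (Hq : l * (2 * dot w D + l * dot D D) = 0).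
  { rewrite onS1_iff in Hw, Hu; rewrite El in Hu; destruct w as [a b], D as [c d];
    unfold lerp, dot in *; simpl in *.
    replace (a + c - a) with c in Hu by ring; replace (b + d - b) with d in Hu by ring.
    transitivity ((a + l * c) * (a + l * c) + (b + l * d) * (b + l * d) - (a * a + b * b)); [ring|].
    rewrite Hu, Hw; ring. }
  assert (Hlam : l = exit_param w D).
  { apply Rmult_integral in Hq; destruct Hq as [Hq|Hq]; [contradiction|].
    assert (HD0 : dot D D <> 0) by (apply Rgt_not_eq, HD).
    unfold exit_param; apply (Rmult_eq_reg_r (dot D D)); [field_simplify; auto; lra | exact HD0]. }
  rewrite El, Hlam; destruct w, D; unfold lerp, exit_point; simpl; f_equal; ring.
Qed.

Definition other_end (Q w : point) : point := exit_point w (vec w Q).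

Section OtherEnd.
Variables (Q w : point).
Hypotheses (HQ : inD Q) (Hw : onS1 w).

Lemma vec_nonzero : 0 < dot (vec w Q) (vec w Q).
Proof.
  apply sqdist_pos; intro E; rewrite E in Hw; rewrite onS1_iff, inD_iff in *; lra.
Qed.

Lemma other_end_param_pos : 0 < exit_param w (vec w Q).
Proof.
  pose proof vec_nonzero; pose proof (dot_lt_1 w Q Hw HQ); rewrite onS1_iff in Hw.
  unfold exit_param; apply Rdiv_lt_0_compat; [|lra].
  destruct w, Q; unfold vec, dot in *; simpl in *; nra.
Qed.

Lemma cross_other_end (X : point) :
  cross w (other_end Q w) X = exit_param w (vec w Q) * cross w Q X.
Proof. unfold other_end, exit_point, vec, cross; simpl; ring. Qed.

Lemma other_end_onS1 : onS1 (other_end Q w).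
Proof. apply exit_point_onS1; [exact Hw | exact vec_nonzero]. Qed.

Lemma other_end_neq : other_end Q w <> w.
Proof.
  intro E; pose proof vec_nonzero as HD; pose proof other_end_param_pos as Ht.
  revert E HD Ht; unfold other_end, exit_point.
  generalize (exit_param w (vec w Q)); intros t E HD Ht.
  destruct w as [a b], Q as [c d]; unfold vec, dot in *; simpl in *; injection E; intros E2 E1.
  assert (c - a = 0) by (apply (Rmult_eq_reg_l t); lra).
  assert (d - b = 0) by (apply (Rmult_eq_reg_l t); lra).
  nra.
Qed.

Lemma other_end_unique (u : point) : onS1 u -> u <> w -> cross w u Q = 0 -> u = other_end Q w.
Proof.
  intros Hu Huw Hc; apply exit_point_unique; auto using vec_nonzero.
  unfold cross, vec in *; simpl; lra.
Qed.

End OtherEnd.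

Lemma psi_eq (U : point -> Prop) (v w : point) :
  psi_spec U v w -> (forall u, psi_spec U v u -> u = w) -> psi U v = w.
Proof.
  intros H Hu; unfold psi; apply Hu.
  apply (epsilon_spec (inhabits v) (fun w => psi_spec U v w)); exists w; exact H.
Qed.

Lemma cross_segment (w u A B X : point) : segment A B X ->
  exists s, 0 <= s <= 1 /\ cross w u X = (1 - s) * cross w u A + s * cross w u B.
Proof. intros [s [Hs ->]]; exists s; split; [exact Hs | unfold cross; simpl; ring]. Qed.

Lemma segment_l (A B : point) : segment A B A.
Proof. exists 0; split; [lra | destruct A, B; simpl; f_equal; ring]. Qed.

Lemma segment_r (A B : point) : segment A B B.
Proof. exists 1; split; [lra | destruct A, B; simpl; f_equal; ring]. Qed.

Lemma psi_spec_segment (A B w u : point) : psi_spec (segment A B) w u <->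
  onS1 u /\ u <> w /\ 0 <= cross w u A /\ 0 <= cross w u B /\
  (cross w u A = 0 \/ cross w u B = 0).
Proof.
  split.
  - intros [Hu [Huw [[X [HX HXc]] Hall]]].
    pose proof (Hall A (segment_l A B)); pose proof (Hall B (segment_r A B)).
    destruct (cross_segment w u A B X HX) as [s [Hs Es]]; unfold collinear in HXc.
    repeat split; auto.
    destruct (Req_dec s 0) as [-> | Hs0]; [left; lra | right; nra].
  - intros (Hu & Huw & HA & HB & Hz); repeat split; auto.
    + destruct Hz as [Hz | Hz]; [exists A; split; [apply segment_l | exact Hz] |
                                 exists B; split; [apply segment_r | exact Hz]].
    + intros X HX; destruct (cross_segment w u A B X HX) as [s [Hs ->]]; nra.
Qed.

Lemma psi_spec_segment_other_end (A B w u : point) : inD A -> inD B -> onS1 w ->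
  psi_spec (segment A B) w u <->
  (u = other_end A w /\ 0 <= cross w A B) \/ (u = other_end B w /\ cross w A B <= 0).
Proof.
  intros HA HB Hw; rewrite psi_spec_segment.
  pose proof (other_end_param_pos A w HA Hw) as PA.
  pose proof (other_end_param_pos B w HB Hw) as PB.
  split.
  - intros (Hu & Huw & CA & CB & [Hz | Hz]).
    + left; assert (E : u = other_end A w) by (apply other_end_unique; auto).
      split; [exact E|]; rewrite E, cross_other_end in CB; auto; nra.
    + right; assert (E : u = other_end B w) by (apply other_end_unique; auto).
      split; [exact E|]; rewrite E, cross_other_end, cross_swap in CA; auto; nra.
  - intros [[-> H] | [-> H]]; (split; [auto using other_end_onS1|]);
      (split; [auto using other_end_neq|]); rewrite !cross_other_end by auto;
      rewrite ?(cross_swap w A B), ?cross_diag; repeat split; try nra;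
      first [left; ring | right; ring].
Qed.

Lemma psi_seg_pos (A B w : point) : inD A -> inD B -> onS1 w -> 0 < cross w A B ->
  psi_seg A B w = other_end A w.
Proof.
  intros HA HB Hw Hc; unfold psi_seg; apply psi_eq.
  - apply psi_spec_segment_other_end; auto; left; split; [reflexivity | lra].
  - intros u Hu; apply psi_spec_segment_other_end in Hu; auto.
    destruct Hu as [[-> _] | [_ H]]; [reflexivity | lra].
Qed.

Lemma psi_seg_neg (A B w : point) : inD A -> inD B -> onS1 w -> cross w A B < 0 ->
  psi_seg A B w = other_end B w.
Proof.
  intros HA HB Hw Hc; unfold psi_seg; apply psi_eq.
  - apply psi_spec_segment_other_end; auto; right; split; [reflexivity | lra].
  - intros u Hu; apply psi_spec_segment_other_end in Hu; auto.
    destruct Hu as [[_ H] | [-> _]]; [lra | reflexivity].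
Qed.

Section ChordCoordinate.
Variables v1 v2 : point.
Hypotheses (Hv1 : onS1 v1) (Hv2 : onS1 v2) (Hv12 : v1 <> v2).

(* A projective coordinate on the circle with [v1] at 0 and [v2] at infinity;
   [coord_pt] inverts it by following the line through [v1] with direction
   [coord_dir z]. *)
Definition coord (w : point) : R := (1 - dot w v1) / cross v1 v2 w.

Definition coord_dir (z : R) : point :=
  (- snd v1 - z * (fst v2 - fst v1), fst v1 - z * (snd v2 - snd v1)).

Definition coord_pt (z : R) : point := exit_point v1 (coord_dir z).

Definition chord_form (P : point) (z1 z2 : R) : R :=
  sqdist v1 v2 * (1 - dot v2 P) * z1 * z2 - cross v1 v2 P * (z1 + z2) + (1 - dot v1 P).

Lemma dot_vec_chord : dot v1 (vec v1 v2) = - sqdist v1 v2 / 2.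
Proof.
  pose proof (sqdist_onS1 v1 v2 Hv1 Hv2); rewrite onS1_iff in Hv1.
  unfold dot, vec, sqdist in *; simpl in *; lra.
Qed.

Lemma one_sub_norm_lerp (s : R) :
  1 - dot (lerp v1 v2 s) (lerp v1 v2 s) = s * (1 - s) * sqdist v1 v2.
Proof.
  pose proof (norm_lerp v1 v2 s) as K; rewrite sqdist_onS1 in * by assumption.
  rewrite onS1_iff in Hv1; rewrite Hv1 in K; lra.
Qed.

Lemma inD_lerp_iff (s : R) : inD (lerp v1 v2 s) <-> 0 < s < 1.
Proof.
  pose proof (one_sub_norm_lerp s) as K; pose proof (sqdist_pos v1 v2 Hv12) as HE.
  rewrite inD_iff; split; intro H.
  - assert (0 < s * (1 - s)) by (destruct (Rle_or_lt (s * (1 - s)) 0); nra).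
    split; nra.
  - assert (0 < s * (1 - s)) by nra; nra.
Qed.

Lemma inD_on_chord (Q : point) : inD Q -> cross v1 v2 Q = 0 ->
  exists a, 0 < a < 1 /\ Q = lerp v1 v2 a.
Proof.
  intros HQ Hc; destruct (collinear_lerp v1 v2 Q Hv12 Hc) as [a ->].
  exists a; split; [apply inD_lerp_iff; assumption | reflexivity].
Qed.

Lemma cross_chord_sq (P : point) :
  4 * (cross v1 v2 P * cross v1 v2 P)
  = 4 * sqdist v1 v2 * (1 - dot v1 P) * (1 - dot v2 P)
    - sqdist v1 v2 * sqdist v1 v2 * (1 - dot P P).
Proof.
  rewrite onS1_iff in Hv1, Hv2; unfold cross, sqdist, dot in *.
  clear Hv12; destruct v1 as [x1 y1], v2 as [x2 y2], P as [px py]; simpl in *; nsatz.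
Qed.

Lemma onS1_on_chord (w : point) : onS1 w -> cross v1 v2 w = 0 -> w = v1 \/ w = v2.
Proof.
  intros Hw Hc; destruct (collinear_lerp v1 v2 w Hv12 Hc) as [s ->].
  pose proof (one_sub_norm_lerp s) as K; pose proof (sqdist_pos v1 v2 Hv12).
  rewrite onS1_iff in Hw; rewrite Hw in K.
  assert (Hs : s * (1 - s) = 0) by (apply (Rmult_eq_reg_r (sqdist v1 v2)); lra).
  apply Rmult_integral in Hs; destruct Hs as [Hs | Hs]; [left | right];
    unfold lerp; destruct v1, v2; simpl; f_equal; replace s with (1 - (1 - s)) by ring;
    try rewrite Hs; ring.
Qed.

Lemma coord_dir_nonzero (z : R) : 0 < dot (coord_dir z) (coord_dir z).
Proof.
  pose proof (sqdist_pos v1 v2 Hv12) as HE; pose proof dot_vec_chord as Hd.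
  unfold coord_dir, dot, vec, sqdist in *.
  destruct v1 as [a b], v2 as [c d]; simpl in *.
  set (x := - b - z * (c - a)); set (y := a - z * (d - b)).
  destruct (Rle_or_lt (x * x + y * y) 0) as [Hl | Hl]; [exfalso | exact Hl].
  assert (x = 0) by nra; assert (y = 0) by nra; unfold x, y in *.
  assert (a * (c - a) + b * (d - b) = 0).
  { replace a with (z * (d - b)) at 1 by lra; replace b with (- z * (c - a)) at 2 by lra; ring. }
  lra.
Qed.

Lemma coord_pt_onS1 (z : R) : onS1 (coord_pt z).
Proof. apply exit_point_onS1; [exact Hv1 | apply coord_dir_nonzero]. Qed.

Lemma cross_dot_coord_pt (z : R) :
  cross v1 v2 (coord_pt z) * (2 * dot (coord_dir z) (coord_dir z))
    = z * sqdist v1 v2 * sqdist v1 v2 /\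
  (1 - dot (coord_pt z) v1) * (2 * dot (coord_dir z) (coord_dir z))
    = z * z * sqdist v1 v2 * sqdist v1 v2.
Proof.
  pose proof (coord_dir_nonzero z) as HN.
  assert (Ht : exit_param v1 (coord_dir z) * dot (coord_dir z) (coord_dir z)
               = -2 * dot v1 (coord_dir z)) by (unfold exit_param; field; lra).
  unfold coord_pt, exit_point; rewrite onS1_iff in Hv1, Hv2.
  generalize dependent (exit_param v1 (coord_dir z)); intros t Ht.
  unfold coord_dir, cross, dot, sqdist in *.
  clear HN Hv12; destruct v1 as [a b], v2 as [c d]; simpl in *.
  split; nsatz.
Qed.

Lemma coord_pt_cross_sign (z : R) : z <> 0 -> 0 < z * cross v1 v2 (coord_pt z).
Proof.
  intro Hz; destruct (cross_dot_coord_pt z) as [E _].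
  pose proof (coord_dir_nonzero z); pose proof (sqdist_pos v1 v2 Hv12).
  assert (0 < z * z) by exact (Rsqr_pos_lt z Hz).
  assert (0 < z * cross v1 v2 (coord_pt z) * (2 * dot (coord_dir z) (coord_dir z))).
  { rewrite Rmult_assoc, E; replace (z * (z * sqdist v1 v2 * sqdist v1 v2))
      with (z * z * (sqdist v1 v2 * sqdist v1 v2)) by ring.
    apply Rmult_lt_0_compat; [assumption | nra]. }
  apply (Rmult_lt_reg_r (2 * dot (coord_dir z) (coord_dir z))); lra.
Qed.

Lemma coord_coord_pt (z : R) : z <> 0 -> coord (coord_pt z) = z.
Proof.
  intro Hz; destruct (cross_dot_coord_pt z) as [E1 E2].
  pose proof (coord_pt_cross_sign z Hz) as Hs; pose proof (coord_dir_nonzero z).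
  assert (Hc : cross v1 v2 (coord_pt z) <> 0) by (intro E; rewrite E in Hs; lra).
  unfold coord.
  apply (Rmult_eq_reg_r (cross v1 v2 (coord_pt z) * (2 * dot (coord_dir z) (coord_dir z)))).
  - replace ((1 - dot (coord_pt z) v1) / cross v1 v2 (coord_pt z) *
      (cross v1 v2 (coord_pt z) * (2 * dot (coord_dir z) (coord_dir z))))
      with ((1 - dot (coord_pt z) v1) * (2 * dot (coord_dir z) (coord_dir z))) by (field; auto).
    rewrite E2, E1; ring.
  - apply Rmult_integral_contrapositive_currified; [auto | apply Rgt_not_eq; lra].
Qed.

Lemma coord_pt_inj (z1 z2 : R) : z1 <> 0 -> z2 <> 0 -> coord_pt z1 = coord_pt z2 -> z1 = z2.
Proof. intros H1 H2 E; rewrite <- (coord_coord_pt z1), E by auto; apply coord_coord_pt, H2. Qed.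

Lemma coord_pt_off_chord (z : R) : z <> 0 -> coord_pt z <> v1 /\ coord_pt z <> v2.
Proof.
  intro Hz; pose proof (coord_pt_cross_sign z Hz) as H.
  split; intro E; rewrite E in H; unfold cross in H; ring_simplify in H; lra.
Qed.

Lemma coord_nonzero (w : point) : onS1 w -> cross v1 v2 w <> 0 -> coord w <> 0.
Proof.
  intros Hw Hc.
  assert (Hwv : w <> v1) by (intro E; apply Hc; rewrite E; unfold cross; ring).
  pose proof (one_sub_dot_pos w v1 Hw Hv1 Hwv).
  unfold coord; intro E; apply (Rmult_eq_compat_r (cross v1 v2 w)) in E.
  field_simplify in E; auto; lra.
Qed.

Lemma coord_pt_coord (w : point) : onS1 w -> cross v1 v2 w <> 0 -> coord_pt (coord w) = w.
Proof.
  intros Hw Hc; symmetry; apply exit_point_unique; auto using coord_dir_nonzero.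
  - intro E; apply Hc; rewrite E; unfold cross; ring.
  - assert (Hz : coord w * cross v1 v2 w = 1 - dot w v1) by (unfold coord; field; auto).
    rewrite onS1_iff in Hv1; revert Hz; generalize (coord w); intros z Hz.
    unfold coord_dir, cross, dot in *.
    destruct v1 as [a b], v2 as [c d], w as [x y]; simpl in *; nra.
Qed.

Lemma cross_coord_pt_pair (P : point) (z1 z2 : R) :
  cross (coord_pt z1) (coord_pt z2) P
    * (dot (coord_dir z1) (coord_dir z1) * dot (coord_dir z2) (coord_dir z2))
  = sqdist v1 v2 * (z1 - z2) * chord_form P z1 z2.
Proof.
  pose proof (coord_dir_nonzero z1) as HN1; pose proof (coord_dir_nonzero z2) as HN2.
  assert (Ht1 : exit_param v1 (coord_dir z1) * dot (coord_dir z1) (coord_dir z1)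
                = -2 * dot v1 (coord_dir z1)) by (unfold exit_param; field; lra).
  assert (Ht2 : exit_param v1 (coord_dir z2) * dot (coord_dir z2) (coord_dir z2)
                = -2 * dot v1 (coord_dir z2)) by (unfold exit_param; field; lra).
  unfold coord_pt, exit_point, chord_form; rewrite onS1_iff in Hv1, Hv2.
  generalize dependent (exit_param v1 (coord_dir z1)); intros t1 Ht1.
  generalize dependent (exit_param v1 (coord_dir z2)); intros t2 Ht2.
  unfold coord_dir, cross, dot, sqdist in *.
  clear HN1 HN2 Hv12; destruct v1 as [a b], v2 as [c d], P as [px py]; simpl in *.
  nsatz.
Qed.

Lemma collinear_coord_pt (P : point) (z1 z2 : R) :
  collinear (coord_pt z1) (coord_pt z2) P <-> z1 = z2 \/ chord_form P z1 z2 = 0.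
Proof.
  pose proof (cross_coord_pt_pair P z1 z2) as K; unfold collinear.
  pose proof (coord_dir_nonzero z1) as N1; pose proof (coord_dir_nonzero z2) as N2.
  pose proof (sqdist_pos v1 v2 Hv12) as HE.
  split; intro Hc.
  - rewrite Hc, Rmult_0_l in K; symmetry in K.
    apply Rmult_integral in K; destruct K as [K | K]; [|right; exact K].
    apply Rmult_integral in K; destruct K; [lra | left; lra].
  - assert (X : cross (coord_pt z1) (coord_pt z2) P *
      (dot (coord_dir z1) (coord_dir z1) * dot (coord_dir z2) (coord_dir z2)) = 0)
      by (rewrite K; destruct Hc as [-> | ->]; ring).
    apply Rmult_integral in X; destruct X; [assumption | nra].
Qed.

Lemma chord_form_lerp (a z1 z2 : R) :
  chord_form (lerp v1 v2 a) z1 z2 = sqdist v1 v2 / 2 * ((1 - a) * sqdist v1 v2 * z1 * z2 + a).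
Proof.
  unfold chord_form; rewrite cross_lerp, !sqdist_onS1 by assumption.
  rewrite onS1_iff in Hv1, Hv2.
  replace (1 - dot v1 (lerp v1 v2 a)) with ((1 - a) * (1 - dot v1 v1) + a * (1 - dot v1 v2))
    by (unfold dot, lerp; simpl; ring).
  replace (1 - dot v2 (lerp v1 v2 a)) with ((1 - a) * (1 - dot v1 v2) + a * (1 - dot v2 v2))
    by (unfold dot, lerp; simpl; ring).
  rewrite Hv1, Hv2; field.
Qed.

Lemma other_end_coord_pt (a z : R) : 0 < a < 1 -> z <> 0 ->
  other_end (lerp v1 v2 a) (coord_pt z) = coord_pt (- a / ((1 - a) * sqdist v1 v2 * z)).
Proof.
  intros Ha Hz; pose proof (sqdist_pos v1 v2 Hv12) as HE.
  set (z' := - a / ((1 - a) * sqdist v1 v2 * z)).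
  assert (Hzz : z' * z = - a / ((1 - a) * sqdist v1 v2))
    by (unfold z'; field; repeat split; try assumption; apply Rgt_not_eq; lra).
  assert (Hneg : z' * z < 0).
  { rewrite Hzz; unfold Rdiv; rewrite Ropp_mult_distr_l_reverse; apply Ropp_lt_gt_0_contravar.
    apply Rmult_gt_0_compat; [lra | apply Rinv_0_lt_compat; nra]. }
  symmetry; apply other_end_unique; auto using coord_pt_onS1.
  - apply inD_lerp_iff, Ha.
  - intro E; apply coord_pt_inj in E; [nra | intro Hz'; rewrite Hz' in Hneg; lra | exact Hz].
  - apply collinear_coord_pt; right; rewrite chord_form_lerp.
    replace ((1 - a) * sqdist v1 v2 * z * z') with ((1 - a) * sqdist v1 v2 * (z' * z)) by ring.
    rewrite Hzz; field; lra.
Qed.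

End ChordCoordinate.

Definition psi2_ratio (a1 a2 : R) : R := a2 * (1 - a1) / (a1 * (1 - a2)).

Lemma psi2_ratio_gt_1 (a1 a2 : R) : 0 < a1 -> a1 < a2 -> a2 < 1 -> 1 < psi2_ratio a1 a2.
Proof.
  intros; unfold psi2_ratio; apply (Rmult_lt_reg_r (a1 * (1 - a2))); [nra|].
  field_simplify; nra.
Qed.

Section Dynamics.
Variables (v1 v2 : point) (a1 a2 : R).
Hypotheses (Hv1 : onS1 v1) (Hv2 : onS1 v2) (Hv12 : v1 <> v2)
  (Ha1 : 0 < a1) (Ha12 : a1 < a2) (Ha2 : a2 < 1).

Let F := psi_seg (lerp v1 v2 a1) (lerp v1 v2 a2).
Let pt := coord_pt v1 v2.
Let E := sqdist v1 v2.

Lemma psi_seg_coord_pt_pos (z : R) : 0 < z -> F (pt z) = pt (- a1 / ((1 - a1) * E * z)).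
Proof.
  intro Hz; pose proof (Rgt_not_eq _ _ Hz) as Hz0.
  pose proof (coord_pt_cross_sign v1 v2 Hv1 Hv2 Hv12 z Hz0) as Hc; fold pt in Hc.
  unfold F; rewrite psi_seg_pos.
  - apply other_end_coord_pt; auto; lra.
  - apply inD_lerp_iff; auto; lra.
  - apply inD_lerp_iff; auto; lra.
  - apply coord_pt_onS1; auto.
  - rewrite cross_cycle, cross_lerp_lerp; apply Rmult_lt_0_compat; [lra | nra].
Qed.

Lemma psi_seg_coord_pt_neg (z : R) : z < 0 -> F (pt z) = pt (- a2 / ((1 - a2) * E * z)).
Proof.
  intro Hz; pose proof (Rlt_not_eq _ _ Hz) as Hz0.
  pose proof (coord_pt_cross_sign v1 v2 Hv1 Hv2 Hv12 z Hz0) as Hc; fold pt in Hc.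
  unfold F; rewrite psi_seg_neg.
  - apply other_end_coord_pt; auto; lra.
  - apply inD_lerp_iff; auto; lra.
  - apply inD_lerp_iff; auto; lra.
  - apply coord_pt_onS1; auto.
  - rewrite cross_cycle, cross_lerp_lerp.
    assert (cross v1 v2 (pt z) < 0) by nra; nra.
Qed.

Lemma psi2_coord_pt_pos (z : R) : 0 < z -> F (F (pt z)) = pt (psi2_ratio a1 a2 * z).
Proof.
  intro Hz; pose proof (sqdist_pos v1 v2 Hv12) as HE; fold E in HE.
  rewrite psi_seg_coord_pt_pos by exact Hz; rewrite psi_seg_coord_pt_neg.
  - f_equal; unfold psi2_ratio; field; repeat split; apply Rgt_not_eq; lra.
  - assert (0 < a1 / ((1 - a1) * E * z))
      by (apply Rdiv_lt_0_compat; [lra | repeat apply Rmult_lt_0_compat; lra]).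
    unfold Rdiv in *; lra.
Qed.

Lemma psi2_coord_pt_neg (z : R) : z < 0 -> F (F (pt z)) = pt (z / psi2_ratio a1 a2).
Proof.
  intro Hz; pose proof (sqdist_pos v1 v2 Hv12) as HE; fold E in HE.
  rewrite psi_seg_coord_pt_neg by exact Hz; rewrite psi_seg_coord_pt_pos.
  - f_equal; unfold psi2_ratio; field;
    repeat split; first [apply Rgt_not_eq; lra | apply Rlt_not_eq; lra].
  - replace (- a2 / ((1 - a2) * E * z)) with (a2 / ((1 - a2) * E * - z))
      by (field; repeat split; first [apply Rgt_not_eq; lra | apply Rlt_not_eq; lra]).
    apply Rdiv_lt_0_compat; [lra | repeat apply Rmult_lt_0_compat; lra].
Qed.

Lemma psi_iter_coord_pt_pos (k : nat) (z : R) : 0 < z ->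
  iter_pt F (2 * k) (pt z) = pt (psi2_ratio a1 a2 ^ k * z).
Proof.
  intro Hz; pose proof (psi2_ratio_gt_1 a1 a2 Ha1 Ha12 Ha2) as HR.
  induction k as [|k IH]; [unfold iter_pt; simpl; f_equal; ring|].
  unfold iter_pt in *; replace (2 * S k)%nat with (S (S (2 * k))) by lia; rewrite !Nat.iter_succ.
  rewrite IH, psi2_coord_pt_pos; [f_equal; simpl; ring|].
  apply Rmult_lt_0_compat; [apply pow_lt; lra | exact Hz].
Qed.

Lemma psi_iter_coord_pt_neg (k : nat) (z : R) : z < 0 ->
  iter_pt F (2 * k) (pt z) = pt (z / psi2_ratio a1 a2 ^ k).
Proof.
  intro Hz; pose proof (psi2_ratio_gt_1 a1 a2 Ha1 Ha12 Ha2) as HR.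
  induction k as [|k IH]; [unfold iter_pt; simpl; f_equal; field|].
  unfold iter_pt in *; replace (2 * S k)%nat with (S (S (2 * k))) by lia; rewrite !Nat.iter_succ.
  pose proof (pow_lt (psi2_ratio a1 a2) k ltac:(lra)).
  rewrite IH, psi2_coord_pt_neg; [f_equal; simpl; field; split; apply Rgt_not_eq; lra|].
  unfold Rdiv; apply Ropp_lt_cancel; rewrite Ropp_0, Ropp_mult_distr_l.
  apply Rmult_lt_0_compat; [lra | apply Rinv_0_lt_compat; lra].
Qed.

End Dynamics.

Lemma cosh_DeltaK (n : nat) (P Q : point) : 0 < INR n * dK P Q ->
  cosh (DeltaK n P Q)
  = (exp (INR n * dK P Q) ^ 2 + 1) / (exp (INR n * dK P Q) ^ 2 - 1).
Proof.
  intro Hd; unfold DeltaK; set (K := exp (INR n * dK P Q)).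
  assert (HK : 1 < K) by (unfold K; rewrite <- exp_0; apply exp_increasing, Hd).
  rewrite cosh_ln by (apply Rdiv_lt_0_compat; lra).
  field; repeat split; apply Rgt_not_eq; nra.
Qed.

Lemma DeltaK_pos (n : nat) (P Q : point) : 0 < INR n * dK P Q -> 0 < DeltaK n P Q.
Proof.
  intro Hd; unfold DeltaK; set (K := exp (INR n * dK P Q)).
  assert (HK : 1 < K) by (unfold K; rewrite <- exp_0; apply exp_increasing, Hd).
  apply exp_lt_inv; rewrite exp_0, exp_ln by (apply Rdiv_lt_0_compat; lra).
  apply (Rmult_lt_reg_r (K - 1)); [lra|]; field_simplify; lra.
Qed.

Lemma delta_eq (P1 P2 P : point) (m : R) : is_delta P1 P2 P m -> delta P1 P2 P = m.
Proof.
  intros [[S [HS [HSc HSm]]] Hmin]; unfold delta.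
  destruct (epsilon_spec (inhabits 0) (is_delta P1 P2 P) (ex_intro _ m (conj
    (ex_intro _ S (conj HS (conj HSc HSm))) Hmin))) as [[S' [HS' [HS'c HS'm]]] Hmin'].
  pose proof (Hmin' S HS HSc); pose proof (Hmin S' HS' HS'c); lra.
Qed.

Lemma exp_INR_mult (n : nat) (x : R) : exp (INR n * x) = exp x ^ n.
Proof.
  induction n as [|n IH]; [simpl; rewrite Rmult_0_l; apply exp_0|].
  rewrite S_INR, Rmult_plus_distr_r, Rmult_1_l, exp_plus, IH; simpl; ring.
Qed.

Section LerpDistances.
Variables v1 v2 : point.
Hypotheses (Hv1 : onS1 v1) (Hv2 : onS1 v2) (Hv12 : v1 <> v2).

Lemma one_sub_dot_lerp_lerp (s t : R) :
  1 - dot (lerp v1 v2 s) (lerp v1 v2 t) = (s + t - 2 * s * t) * sqdist v1 v2 / 2.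
Proof.
  rewrite sqdist_onS1 by assumption; rewrite onS1_iff in Hv1, Hv2.
  transitivity (1 - dot v1 v1 - (s + t) * (dot v1 v2 - dot v1 v1)
                - s * t * (dot v1 v1 - 2 * dot v1 v2 + dot v2 v2));
    [unfold dot, lerp; simpl; ring|].
  rewrite Hv1, Hv2; field.
Qed.

Lemma exp_dK_lerp (a1 a2 : R) : 0 < a1 -> a1 < a2 -> a2 < 1 ->
  exp (2 * dK (lerp v1 v2 a1) (lerp v1 v2 a2)) = psi2_ratio a1 a2.
Proof.
  intros Ha1 Ha12 Ha2; pose proof (psi2_ratio_gt_1 a1 a2 Ha1 Ha12 Ha2) as HR.
  pose proof (sqdist_pos v1 v2 Hv12) as HE.
  assert (Hln : 0 < ln (psi2_ratio a1 a2)) by (apply exp_lt_inv; rewrite exp_0, exp_ln; lra).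
  replace (dK (lerp v1 v2 a1) (lerp v1 v2 a2)) with (/ 2 * Rabs (ln (psi2_ratio a1 a2))).
  { rewrite Rabs_right by lra; replace (2 * (/ 2 * ln (psi2_ratio a1 a2)))
      with (ln (psi2_ratio a1 a2)) by field; apply exp_ln; lra. }
  apply Rsqr_cosh_inj; [pose proof (Rabs_pos (ln (psi2_ratio a1 a2))); lra | apply dK_nonneg |].
  rewrite Rsqr_cosh_half_abs_ln, cosh_dK by (try apply inD_lerp_iff; auto; try lra;
    intro E; apply lerp_inj in E; auto; lra).
  rewrite !one_sub_norm_lerp, one_sub_dot_lerp_lerp by auto.
  unfold psi2_ratio; field; repeat split; apply Rgt_not_eq; nra.
Qed.

Lemma dK_lerp_pos (a1 a2 : R) : 0 < a1 -> a1 < a2 -> a2 < 1 ->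
  0 < dK (lerp v1 v2 a1) (lerp v1 v2 a2).
Proof.
  intros Ha1 Ha12 Ha2.
  assert (HR : exp 0 < exp (2 * dK (lerp v1 v2 a1) (lerp v1 v2 a2)))
    by (rewrite exp_0, exp_dK_lerp; auto; apply psi2_ratio_gt_1; auto).
  apply exp_lt_inv in HR; lra.
Qed.

Lemma cosh_DeltaK_lerp (n : nat) (a1 a2 : R) : (0 < n)%nat -> 0 < a1 -> a1 < a2 -> a2 < 1 ->
  cosh (DeltaK n (lerp v1 v2 a1) (lerp v1 v2 a2))
  = (psi2_ratio a1 a2 ^ n + 1) / (psi2_ratio a1 a2 ^ n - 1).
Proof.
  intros Hn Ha1 Ha12 Ha2.
  rewrite cosh_DeltaK
    by (apply Rmult_lt_0_compat; [apply lt_0_INR, Hn | apply dK_lerp_pos; auto]).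
  replace (exp (INR n * dK (lerp v1 v2 a1) (lerp v1 v2 a2)) ^ 2) with (psi2_ratio a1 a2 ^ n);
    [reflexivity|].
  rewrite <- exp_dK_lerp, <- !exp_INR_mult by auto; f_equal.
  replace (INR 2) with 2 by (simpl; ring); ring.
Qed.

End LerpDistances.

Section Delta.
Variables v1 v2 P : point.
Hypotheses (Hv1 : onS1 v1) (Hv2 : onS1 v2) (Hv12 : v1 <> v2)
  (HP : inD P) (HPc : cross v1 v2 P <> 0).

Let al := 1 - dot v1 P.
Let be := 1 - dot v2 P.
Let s0 := al / (al + be).

Let al_pos : 0 < al.
Proof. pose proof (dot_lt_1 v1 P Hv1 HP); unfold al; lra. Qed.

Let be_pos : 0 < be.
Proof. pose proof (dot_lt_1 v2 P Hv2 HP); unfold be; lra. Qed.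

Let s0_range : 0 < s0 < 1.
Proof.
  unfold s0; split; [apply Rdiv_lt_0_compat; lra|].
  apply (Rmult_lt_reg_r (al + be)); [lra|]; field_simplify; lra.
Qed.

(* [s0] kills the square term of [cosh_dK_lerp], so [lerp v1 v2 s0] realises [delta]. *)
Let s0_balanced : (1 - s0) * al - s0 * be = 0.
Proof. unfold s0; field; lra. Qed.

Let point_neq_lerp (s : R) : P <> lerp v1 v2 s.
Proof. intro E; apply HPc; rewrite E; apply cross_lerp. Qed.

Lemma cosh_dK_lerp (s : R) : 0 < s < 1 ->
  Rsqr (cosh (dK P (lerp v1 v2 s)))
  = 4 * al * be / ((1 - dot P P) * sqdist v1 v2)
    + ((1 - s) * al - s * be) * ((1 - s) * al - s * be)
      / ((1 - dot P P) * (s * (1 - s) * sqdist v1 v2)).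
Proof.
  intro Hs; pose proof (sqdist_pos v1 v2 Hv12); pose proof (proj1 (inD_iff P) HP).
  rewrite cosh_dK by first [apply point_neq_lerp | exact HP | apply inD_lerp_iff; auto].
  rewrite one_sub_dot_lerp, one_sub_norm_lerp by auto; fold al be.
  field; repeat split; apply Rgt_not_eq; nra.
Qed.

Lemma delta_lerp (a1 a2 : R) : a1 <> a2 ->
  delta (lerp v1 v2 a1) (lerp v1 v2 a2) P = dK P (lerp v1 v2 s0).
Proof.
  intro Ha; pose proof (sqdist_pos v1 v2 Hv12).
  apply delta_eq; split.
  - exists (lerp v1 v2 s0); split; [apply inD_lerp_iff, s0_range; auto|]; split; [|reflexivity].
    unfold collinear; rewrite cross_lerp_lerp, cross_lerp; ring.
  - intros S HS HSc; unfold collinear in HSc; rewrite cross_lerp_lerp in HSc.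
    assert (Hc : cross v1 v2 S = 0).
    { apply Rmult_integral in HSc; destruct HSc; [exfalso; apply Ha; lra | assumption]. }
    destruct (collinear_lerp v1 v2 S Hv12 Hc) as [s ->].
    apply inD_lerp_iff in HS; auto.
    destruct (Rle_or_lt (dK P (lerp v1 v2 s0)) (dK P (lerp v1 v2 s))) as [Hle | Hlt]; [exact Hle|].
    exfalso; apply (Rsqr_cosh_lt _ _ (dK_nonneg P (lerp v1 v2 s))) in Hlt.
    rewrite !cosh_dK_lerp, s0_balanced in Hlt by (exact s0_range || assumption).
    assert (0 <= ((1 - s) * al - s * be) * ((1 - s) * al - s * be)
                 / ((1 - dot P P) * (s * (1 - s) * sqdist v1 v2))).
    { pose proof (proj1 (inD_iff P) HP).
      apply Rmult_le_pos; [apply Rle_0_sqr | left; apply Rinv_0_lt_compat].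
      apply Rmult_lt_0_compat; [lra | apply Rmult_lt_0_compat; [nra | lra]]. }
    unfold Rdiv at 2 in Hlt; rewrite !Rmult_0_l in Hlt; lra.
Qed.

Lemma cosh_delta_lerp (a1 a2 : R) : a1 <> a2 ->
  Rsqr (cosh (delta (lerp v1 v2 a1) (lerp v1 v2 a2) P))
  = 4 * al * be / ((1 - dot P P) * sqdist v1 v2).
Proof.
  intro Ha; rewrite delta_lerp, cosh_dK_lerp, s0_balanced by (exact s0_range || assumption).
  unfold Rdiv at 2; rewrite !Rmult_0_l; ring.
Qed.

End Delta.

Section Tau.
Variables (v1 v2 : point) (a1 a2 : R) (P : point) (n : nat).
Hypotheses (Hv1 : onS1 v1) (Hv2 : onS1 v2) (Hv12 : v1 <> v2)
  (Ha1 : 0 < a1) (Ha12 : a1 < a2) (Ha2 : a2 < 1)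
  (HP : inD P) (HPc : cross v1 v2 P <> 0) (Hn : (0 < n)%nat).

Let P1 := lerp v1 v2 a1.
Let P2 := lerp v1 v2 a2.
Let tau := tau_set P1 P2 v1 v2 n P.
Let pt := coord_pt v1 v2.
Let g := cross v1 v2 P.
Let E := sqdist v1 v2.
Let mu := psi2_ratio a1 a2 ^ n.
(* By [chord_form_root_sign] only coordinates [z] with [0 < g * z] can contribute to
   [tau]; on that side of the chord [psi^(2n)] multiplies the coordinate by [s]. *)
Let s := if Rlt_dec 0 g then mu else / mu.

Lemma mu_gt_1 : 1 < mu.
Proof. apply Rlt_pow_R1; [apply psi2_ratio_gt_1; auto | exact Hn]. Qed.

(* [(1 + t)^2 / t] takes the same value at [mu] and [/ mu]: the sign of the
   discriminant does not depend on the side of the chord. *)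
Lemma mu_or_inv_facts (t : R) : t = mu \/ t = / mu ->
  0 < t /\ t <> 1 /\ (1 + t) * (1 + t) = (1 + mu) * (1 + mu) / mu * t.
Proof.
  pose proof mu_gt_1; intros [-> | ->]; repeat split.
  - lra.
  - apply Rgt_not_eq; lra.
  - field; apply Rgt_not_eq; lra.
  - apply Rinv_0_lt_compat; lra.
  - intro E1; apply (f_equal Rinv) in E1; rewrite Rinv_inv, Rinv_1 in E1; lra.
  - field; apply Rgt_not_eq; lra.
Qed.

Lemma s_mu_or_inv : s = mu \/ s = / mu.
Proof. unfold s; destruct (Rlt_dec 0 g); [left | right]; reflexivity. Qed.

Lemma chord_form_root_sign (t z : R) : 0 < t -> chord_form v1 v2 P z (t * z) = 0 -> 0 < g * z.
Proof.
  intros Ht Hz; unfold chord_form in Hz; fold g E in Hz.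
  pose proof (dot_lt_1 v1 P Hv1 HP); pose proof (dot_lt_1 v2 P Hv2 HP).
  pose proof (sqdist_pos v1 v2 Hv12) as HE; fold E in HE.
  assert (0 <= E * (1 - dot v2 P) * t * (z * z)).
  { apply Rmult_le_pos; [repeat apply Rmult_le_pos; lra | apply Rle_0_sqr]. }
  apply (Rmult_lt_reg_l (1 + t)); lra.
Qed.

Lemma psi_iter_coord_pt_ratio (z : R) : z <> 0 ->
  exists t, (t = mu \/ t = / mu) /\ iter_pt (psi_seg P1 P2) (2 * n) (pt z) = pt (t * z).
Proof.
  intro Hz; destruct (Rtotal_order z 0) as [Z | [Z | Z]]; [| contradiction |].
  - exists (/ mu); split; [right; reflexivity|].
    unfold pt, P1, P2; rewrite psi_iter_coord_pt_neg by auto; f_equal; unfold mu, Rdiv; ring.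
  - exists mu; split; [left; reflexivity|].
    unfold pt, P1, P2; rewrite psi_iter_coord_pt_pos by auto; reflexivity.
Qed.

Lemma psi_iter_coord_pt_side (z : R) : 0 < g * z ->
  iter_pt (psi_seg P1 P2) (2 * n) (pt z) = pt (s * z).
Proof.
  intro Hgz; unfold s; destruct (Rlt_dec 0 g) as [G | G].
  - assert (0 < z) by nra.
    unfold pt, P1, P2; rewrite psi_iter_coord_pt_pos by auto; reflexivity.
  - assert (z < 0) by nra.
    unfold pt, P1, P2; rewrite psi_iter_coord_pt_neg by auto; f_equal; unfold mu, Rdiv; ring.
Qed.

Lemma tau_coord_pt (t z : R) : z <> 0 -> 0 < t -> t <> 1 ->
  iter_pt (psi_seg P1 P2) (2 * n) (pt z) = pt (t * z) ->
  (tau (pt z) <-> chord_form v1 v2 P z (t * z) = 0).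
Proof.
  intros Hz Ht Ht1 Hit.
  assert (Htz : t * z <> z) by (intro E1; apply Ht1; apply (Rmult_eq_reg_r z); lra).
  assert (Htz0 : t * z <> 0) by (apply Rmult_integral_contrapositive_currified; lra).
  unfold tau, tau_set; cbv zeta; rewrite Hit; unfold pt.
  rewrite (collinear_coord_pt v1 v2 Hv1 Hv2 Hv12).
  destruct (coord_pt_off_chord v1 v2 Hv1 Hv2 Hv12 z Hz) as [N1 N2].
  split.
  - intros (_ & _ & _ & _ & [E1 | E1]); [congruence | exact E1].
  - intro E1; repeat split; auto using coord_pt_onS1.
    intro E2; apply coord_pt_inj in E2; auto.
Qed.

Lemma tau_coord (w : point) :
  tau w <-> exists z, chord_form v1 v2 P z (s * z) = 0 /\ w = pt z.
Proof.
  destruct (mu_or_inv_facts s s_mu_or_inv) as (Hs & Hs1 & _).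
  split.
  - intros Hw; pose proof Hw as (Hw1 & Hwv1 & Hwv2 & _).
    assert (Hc : cross v1 v2 w <> 0)
      by (intro Hc; destruct (onS1_on_chord v1 v2 Hv1 Hv2 Hv12 w Hw1 Hc); contradiction).
    set (z := coord v1 v2 w); pose proof (coord_nonzero v1 v2 Hv1 w Hw1 Hc) as Hz.
    assert (Ew : w = pt z) by (symmetry; apply coord_pt_coord; auto).
    exists z; split; [|exact Ew]; rewrite Ew in Hw.
    destruct (psi_iter_coord_pt_ratio z Hz) as (t & Ht & Hit).
    destruct (mu_or_inv_facts t Ht) as (Ht0 & Ht1 & _).
    pose proof (chord_form_root_sign t z Ht0 (proj1 (tau_coord_pt t z Hz Ht0 Ht1 Hit) Hw)).
    apply (tau_coord_pt s z Hz Hs Hs1); [apply psi_iter_coord_pt_side|]; assumption.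
  - intros (z & Hz & ->); pose proof (chord_form_root_sign s z Hs Hz) as Hgz.
    assert (z <> 0) by (intro Z; rewrite Z in Hgz; lra).
    apply (tau_coord_pt s z); auto; apply psi_iter_coord_pt_side, Hgz.
Qed.

Let qa := E * (1 - dot v2 P) * s.
Let qb := - (g * (1 + s)).
Let qc := 1 - dot v1 P.

Lemma tau_card_disc :
  (qb * qb - 4 * qa * qc < 0 -> has_card tau 0) /\
  (qb * qb - 4 * qa * qc = 0 -> has_card tau 1) /\
  (qb * qb - 4 * qa * qc > 0 -> has_card tau 2).
Proof.
  destruct (mu_or_inv_facts s s_mu_or_inv) as (Hs & _ & _).
  pose proof (dot_lt_1 v2 P Hv2 HP); pose proof (sqdist_pos v1 v2 Hv12) as HE; fold E in HE.
  assert (Hform : forall z, chord_form v1 v2 P z (s * z) = qa * z * z + qb * z + qc)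
    by (intro z; unfold chord_form, qa, qb, qc; fold g E; ring).
  assert (Hroot : forall z, qa * z * z + qb * z + qc = 0 -> z <> 0).
  { intros z Hz Z; rewrite <- Hform in Hz; apply chord_form_root_sign in Hz; [|exact Hs].
    rewrite Z, Rmult_0_r in Hz; lra. }
  apply (has_card_quadratic_image tau pt).
  - unfold qa; apply Rgt_not_eq; repeat apply Rmult_lt_0_compat; lra.
  - intros u1 u2 R1 R2; apply coord_pt_inj; auto.
  - intro w; rewrite tau_coord; split; intros (z & Hz & ->); exists z; rewrite Hform in *; auto.
Qed.

Lemma tau_disc :
  4 * (qb * qb - 4 * qa * qc)
  = s * (E * E * (1 - dot P P) * ((mu - 1) * (mu - 1) / mu))
    * (4 * (1 - dot v1 P) * (1 - dot v2 P) / ((1 - dot P P) * E)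
       - ((mu + 1) / (mu - 1)) * ((mu + 1) / (mu - 1))).
Proof.
  destruct (mu_or_inv_facts s s_mu_or_inv) as (Hs & _ & Hsq).
  pose proof mu_gt_1; pose proof (sqdist_pos v1 v2 Hv12) as HE; fold E in HE.
  pose proof (proj1 (inD_iff P) HP).
  pose proof (cross_chord_sq v1 v2 Hv1 Hv2 P) as Hg; fold g E in Hg.
  replace (4 * (qb * qb - 4 * qa * qc))
    with (s * (4 * (g * g) * ((1 + mu) * (1 + mu) / mu)
               - 16 * E * (1 - dot v1 P) * (1 - dot v2 P)))
    by (unfold qa, qb, qc; transitivity (4 * (g * g) * ((1 + s) * (1 + s))
          - 16 * E * (1 - dot v1 P) * (1 - dot v2 P) * s); [rewrite Hsq; field | ring];
        apply Rgt_not_eq; lra).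
  rewrite Hg; field; repeat split; apply Rgt_not_eq; lra.
Qed.

Lemma tau_card_delta :
  (delta P1 P2 P < DeltaK n P1 P2 -> has_card tau 0) /\
  (delta P1 P2 P = DeltaK n P1 P2 -> has_card tau 1) /\
  (delta P1 P2 P > DeltaK n P1 P2 -> has_card tau 2).
Proof.
  destruct (mu_or_inv_facts s s_mu_or_inv) as (Hs & _ & _).
  pose proof mu_gt_1; pose proof (sqdist_pos v1 v2 Hv12) as HE; fold E in HE.
  pose proof (proj1 (inD_iff P) HP).
  pose proof (DeltaK_pos n P1 P2 (Rmult_lt_0_compat _ _ (lt_0_INR _ Hn)
    (dK_lerp_pos v1 v2 Hv1 Hv2 Hv12 a1 a2 Ha1 Ha12 Ha2))) as HDelta0.
  pose proof (cosh_DeltaK_lerp v1 v2 Hv1 Hv2 Hv12 n a1 a2 Hn Ha1 Ha12 Ha2) as HDelta.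
  fold P1 P2 mu in HDelta.
  assert (Hdelta : Rsqr (cosh (delta P1 P2 P))
                   = 4 * (1 - dot v1 P) * (1 - dot v2 P) / ((1 - dot P P) * E))
    by (apply cosh_delta_lerp; auto; lra).
  assert (Hdelta0 : 0 <= delta P1 P2 P)
    by (unfold P1, P2; rewrite delta_lerp; auto using dK_nonneg; lra).
  set (K := s * (E * E * (1 - dot P P) * ((mu - 1) * (mu - 1) / mu))).
  assert (HK : 0 < K).
  { unfold K; apply Rmult_lt_0_compat; [exact Hs|].
    apply Rmult_lt_0_compat; [repeat apply Rmult_lt_0_compat; lra|].
    apply Rdiv_lt_0_compat; nra. }
  assert (Hdisc : 4 * (qb * qb - 4 * qa * qc)
                  = K * (Rsqr (cosh (delta P1 P2 P)) - Rsqr (cosh (DeltaK n P1 P2))))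
    by (rewrite tau_disc, Hdelta, HDelta; reflexivity).
  destruct tau_card_disc as (C0 & C1 & C2).
  split; [|split]; intro Hc; [apply C0 | apply C1 | apply C2].
  - pose proof (Rsqr_cosh_lt _ _ Hdelta0 Hc); nra.
  - rewrite Hc, Rminus_diag, Rmult_0_r in Hdisc; lra.
  - pose proof (Rsqr_cosh_lt _ _ (Rlt_le _ _ HDelta0) Hc); nra.
Qed.

End Tau.

Theorem lemma5p1 (P1 P2 v1 v2 P : point) (n : nat) :
  inD P1 -> inD P2 -> P1 <> P2 ->
  onS1 v1 -> onS1 v2 -> v1 <> v2 ->
  collinear v1 v2 P1 -> collinear v1 v2 P2 ->
  edist v1 P1 < edist v1 P2 ->
  (0 < n)%nat ->
  inD P -> ~ collinear P1 P2 P ->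
  (delta P1 P2 P < DeltaK n P1 P2 -> has_card (tau_set P1 P2 v1 v2 n P) 0) /\
  (delta P1 P2 P = DeltaK n P1 P2 -> has_card (tau_set P1 P2 v1 v2 n P) 1) /\
  (delta P1 P2 P > DeltaK n P1 P2 -> has_card (tau_set P1 P2 v1 v2 n P) 2).
Proof.
  intros HP1 HP2 _ Hv1 Hv2 Hv12 C1 C2 Hd Hn HP Hnc.
  destruct (inD_on_chord v1 v2 Hv1 Hv2 Hv12 P1 HP1 C1) as [a1 [Ha1 ->]].
  destruct (inD_on_chord v1 v2 Hv1 Hv2 Hv12 P2 HP2 C2) as [a2 [Ha2 ->]].
  assert (Ha12 : a1 < a2) by (apply (edist_lerp_lt v1 v2); auto; lra).
  assert (Hg : cross v1 v2 P <> 0).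
  { intro G; apply Hnc; unfold collinear; rewrite cross_lerp_lerp, G; ring. }
  apply tau_card_delta; auto; lra.
Qed.
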